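(* Consider the click-through auction setting below with $n=2$ bidders and arbitrary known values $v_1,v_2\ge 0$. For every information structure that is both calibrated and independent, its expected revenue is at most $\min\big(v_1\mathbb{E}[r_1],\,v_2\mathbb{E}[r_2]\big)$, which is the expected revenue of the no-disclosure information structure. In particular, no independent calibrated information structure (including full disclosure) yields strictly more revenue than no disclosure.
   Context: Setting. There are $n\ge 2$ bidders; bidder $i$ has a known value per click $v_i\ge 0$. A vector of click-through rates (CTRs) $r=(r_1,\dots,r_n)\in[0,1]^n$ is drawn from a prior distribution $G$ with finite support (probability mass function $g$). An information structure is a probability distribution $x$ with finite support on pairs $(r,s)\in[0,1]^n\times[0,1]^n$ whose $r$-marginal is $G$, i.e. $\sum_s x(r,s)=g(r)$ for all $r$; $s=(s_1,\dots,s_n)$ is the vector of signals (scores). Given $s$, the winner $i^*$ is a bidder maximizing $v_is_i$, ties broken uniformly at random; the winner's price per click is $p_{i^*}=\max_{j\neq i^*}v_js_j/s_{i^*}$ (revenue is taken to be $0$ if $s_{i^*}=0$), and the winner pays only upon a click, which occurs with probability $r_{i^*}$. The revenue of an information structure is $\mathrm{Rev}=\mathbb{E}[r_{i^*}p_{i^*}]$, the expectation taken over $(r,s)\sim x$ and tie-breaking. An information structure is calibrated if $\mathbb{E}[r_i\mid s_i=t]=t$ for every bidder $i$ and every $t$ with $\Pr[s_i=t]>0$. It is independent if $\mathbb{E}[r_i\mid s]=\mathbb{E}[r_i\mid s_i]$ for every $i$ and every $s$ in the support; otherwise it is correlated. Full disclosure is the structure with $s=r$ almost surely; no disclosure is the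 structure with $s_i=\mathbb{E}[r_i]$ almost surely for every $i$. *)

From HB Require Import structures.
From mathcomp Require Import all_boot all_order all_algebra.
From mathcomp Require Import reals.
Set Implicit Arguments. Unset Strict Implicit. Unset Printing Implicit Defensive.
Import Order.TTheory GRing.Theory Num.Theory.
Local Open Scope ring_scope.

(* A finitely supported information structure is represented as a finite
   probability space (I, p) carrying the random CTR vector r and the random
   signal vector s; the distribution x of (r,s) is the pushforward of p.  The
   prior G is the r-marginal of x. *)

Section Auction.
Variables (R : realType) (n : nat) (I : finType).
Variable (p : I -> R).

Definition is_prob : Prop := (forall k, 0 <= p k) /\ \sum_k p k = 1.

Definition prob (P : pred I) : R := \sum_(k | P k) p k.

Definition expect (X : I -> R) : R := \sum_k p k * X k.

(* conditional expectation E[X | P] (only used when prob P > 0) *)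
Definition condE (X : I -> R) (P : pred I) : R :=
  (\sum_(k | P k) p k * X k) / prob P.

Variables (r s : I -> 'I_n -> R).

Definition calibrated : Prop :=
  forall (i : 'I_n) (t : R), 0 < prob (fun k => s k i == t) ->
    condE (fun k => r k i) (fun k => s k i == t) = t.

Definition independent : Prop :=
  forall (i : 'I_n) (k0 : I), 0 < p k0 ->
    condE (fun k => r k i) (fun k => [forall j, s k j == s k0 j]) =
    condE (fun k => r k i) (fun k => s k i == s k0 i).

Variable (v : 'I_n -> R).

Definition winner (t : 'I_n -> R) (i : 'I_n) : bool :=
  [forall j, v j * t j <= v i * t i].

Definition price (t : 'I_n -> R) (i : 'I_n) : R :=
  if t i == 0 then 0
  else (\big[Num.max/0]_(j | j != i) (v j * t j)) / t i.

(* expected revenue at an outcome (rr, t), averaging over uniform tie-breaking *)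
Definition rev_at (rr t : 'I_n -> R) : R :=
  (\sum_(i | winner t i) rr i * price t i) / (#|[set i | winner t i]|)%:R.

Definition revenue : R := \sum_k p k * rev_at (r k) (s k).

End Auction.

Definition nodisc (R : realType) (n : nat) (I : finType) (p : I -> R)
  (r : I -> 'I_n -> R) : I -> 'I_n -> R :=
  fun _ i => expect p (fun k => r k i).

From HB Require Import structures.
From mathcomp Require Import all_boot all_order all_algebra.
From mathcomp Require Import reals ring.
Set Implicit Arguments. Unset Strict Implicit.
Import Order.TTheory GRing.Theory Num.Theory.
Local Open Scope ring_scope.

(* For a probability p on a finite set and an equivalence relation
      C, a sum is an average of its restrictions to the C-classes.  Hence if
      two random variables X, Y have the same mass on every class, then
      E[X f] = E[Y f] for every f constant on classes.
   2. Calibration + independence give exactly this for X = r_i, Y = s_i and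
      the classes "same signal vector": E[r_i | s] = E[r_i | s_i] = s_i.  So
      E[r_i F(s)] = E[s_i F(s)] for every F.
   3. The revenue at an outcome is linear in the CTR vector, so by 2 the
      revenue of (r, s) equals that of the truthful structure (s, s), and
      that of a constant signal depends on r only through E[r].
   4. With two bidders and nonnegative scores t, the truthful revenue at t is
      the second-highest bid min(v_1 t_1, v_2 t_2).  Concavity of min then
      bounds the revenue by min(v_1 E[s_1], v_2 E[s_2]) = min(v_1 E[r_1],
      v_2 E[r_2]), and no disclosure attains this value. *)

Section CellDecomposition.
Variables (R : realType) (I : finType) (p : I -> R) (C : rel I).
Hypothesis p_ge0 : forall k, 0 <= p k.
Hypothesis C_equiv : equivalence_rel C.

Let cell_mass (k : I) : R := prob p (C k).

Lemma cell_refl k : C k k.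
Proof. by case/equivalence_relP: C_equiv. Qed.

Lemma cell_trans k k' : C k k' -> C k =1 C k'.
Proof. by case/equivalence_relP: C_equiv => _; apply. Qed.

Lemma cell_sym k k' : C k k' -> C k' k.
Proof. by move=> /cell_trans Ckk'; rewrite -Ckk' cell_refl. Qed.

(* an outcome lies in its own class *)
Lemma cell_mass_ge k : p k <= cell_mass k.
Proof.
rewrite /cell_mass /prob (bigD1 k) ?cell_refl //= lerDl.
by apply: sumr_ge0 => ? _; exact: p_ge0.
Qed.

(* a sum equals the p-weighted average of its class sums, each class k being
   weighted by p k / cell_mass k (null classes carry no mass) *)
Lemma sum_by_cells (h : I -> R) :
  \sum_k p k * h k = \sum_k p k / cell_mass k * \sum_(k' | C k k') p k' * h k'.
Proof.
under [RHS]eq_bigr do rewrite mulr_sumr (big_mkcond (C _)).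
rewrite exchange_big /=; apply: eq_bigr => k' _.
transitivity (p k' * h k' * \sum_(k | C k k') p k / cell_mass k'); last first.
  rewrite mulr_sumr big_mkcond; apply: eq_bigr => k _; case: ifP => // Ckk'.
  have -> : cell_mass k = cell_mass k' by apply: eq_bigl; exact: cell_trans.
  by rewrite mulrC.
rewrite -mulr_suml.
have -> : \sum_(k | C k k') p k = cell_mass k'.
  by apply: eq_bigl => k; apply/idP/idP => /cell_sym.
have [mass0|mass_neq0] := eqVneq (cell_mass k') 0.
  have -> : p k' = 0 by apply/eqP; rewrite eq_le p_ge0 -mass0 cell_mass_ge.
  by rewrite !mul0r.
by rewrite divff // mulr1.
Qed.

Lemma sum_swap_on_cells (X Y f : I -> R) :
  (forall k, \sum_(k' | C k k') p k' * X k' = \sum_(k' | C k k') p k' * Y k') ->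
  (forall k k', C k k' -> f k' = f k) ->
  \sum_k p k * (X k * f k) = \sum_k p k * (Y k * f k).
Proof.
move=> cellXY f_const; rewrite !sum_by_cells; apply: eq_bigr => k _; congr (_ * _).
have pull_f (Z : I -> R) :
    \sum_(k' | C k k') p k' * (Z k' * f k') = f k * \sum_(k' | C k k') p k' * Z k'.
  by rewrite mulr_sumr; apply: eq_bigr => k' /f_const ->; ring.
by rewrite !pull_f cellXY.
Qed.
End CellDecomposition.

Section RevenueLinear.
Variables (R : realType) (n : nat) (v : 'I_n -> R).

(* expected payment of bidder i per unit of CTR when the scores are t *)
Definition unit_revenue (t : 'I_n -> R) (i : 'I_n) : R :=
  (if winner v t i then price v t i else 0) / (#|[set j | winner v t j]|)%:R.

Lemma rev_at_linear (rr t : 'I_n -> R) : rev_at v rr t = \sum_i rr i * unit_revenue t i.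
Proof.
rewrite /rev_at /unit_revenue big_mkcond mulr_suml; apply: eq_bigr => i _.
by case: ifP => _; rewrite ?mul0r ?mulr0 ?mulrA.
Qed.

Lemma revenue_constant_signal (I : finType) (p : I -> R) (r : I -> 'I_n -> R)
    (t : 'I_n -> R) :
  revenue p r (fun _ => t) v = rev_at v (fun i => expect p (fun k => r k i)) t.
Proof.
rewrite /revenue rev_at_linear; under eq_bigr do rewrite rev_at_linear mulr_sumr.
rewrite exchange_big; apply: eq_bigr => i _.
by rewrite /expect mulr_suml; apply: eq_bigr => k _; rewrite mulrA.
Qed.
End RevenueLinear.

Section CalibratedIndependent.
Variables (R : realType) (n : nat) (I : finType) (p : I -> R) (r s : I -> 'I_n -> R).
Hypothesis p_ge0 : forall k, 0 <= p k.
Hypothesis cal : calibrated p r s.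
Hypothesis ind : independent p r s.

Definition same_signal (k k' : I) : bool := [forall j, s k' j == s k j].

Lemma same_signal_equiv : equivalence_rel same_signal.
Proof.
apply/equivalence_relP; split => [k|k k' /forallP eq_kk' x]; first exact/forallP.
by apply/forallP/forallP => eq_x j; rewrite (eqP (eq_x j)) ?(eqP (eq_kk' j)) // eq_sym.
Qed.

(* r_i and s_i carry the same mass on every signal class: on a class of
   positive probability, independence and calibration give E[r_i | s] = s_i;
   a null class carries no mass at all *)
Lemma cell_balance (i : 'I_n) (k : I) :
  \sum_(k' | same_signal k k') p k' * r k' i =
  \sum_(k' | same_signal k k') p k' * s k' i.
Proof.
have [/existsP [k0 /andP [kk0 pk0]] | /existsPn null_cell] :=
  boolP [exists k0, same_signal k k0 && (0 < p k0)]; last first.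
  have p0 k' : same_signal k k' -> p k' = 0.
    move=> kk'; apply/eqP; rewrite eq_le p_ge0 andbT.
    by have := null_cell k'; rewrite kk' /= -leNgt.
  by rewrite !big1 // => k' /p0 ->; rewrite mul0r.
have same_k0 := cell_trans same_signal_equiv kk0.
rewrite !(eq_bigl _ _ same_k0).
have mass_gt0 : 0 < prob p (same_signal k0).
  exact: lt_le_trans pk0 (cell_mass_ge p_ge0 same_signal_equiv k0).
have signal_gt0 : 0 < prob p (fun k' => s k' i == s k0 i).
  apply: lt_le_trans pk0 _; rewrite /prob (bigD1 k0) //= lerDl.
  by apply: sumr_ge0 => ? _; exact: p_ge0.
have := ind i pk0; rewrite (cal signal_gt0) /condE -/(same_signal k0).
move=> /(canRL (divfK (lt0r_neq0 mass_gt0))) ->.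
rewrite /prob mulr_sumr; apply: eq_bigr => k' /forallP /(_ i) /eqP ->.
exact: mulrC.
Qed.

Lemma signal_swap (i : 'I_n) (F : ('I_n -> R) -> R) :
  \sum_k p k * (r k i * F (s k)) = \sum_k p k * (s k i * F (s k)).
Proof.
apply: (sum_swap_on_cells p_ge0 same_signal_equiv) => [k|k k' /forallP same_kk'].
  exact: cell_balance.
by congr F; apply: boolp.funext => j; apply/eqP.
Qed.

Lemma expect_signal (i : 'I_n) :
  expect p (fun k => r k i) = expect p (fun k => s k i).
Proof.
have := signal_swap i (fun _ => 1); rewrite /expect.
by under eq_bigr do rewrite mulr1; under [in X in _ = X -> _]eq_bigr do rewrite mulr1.
Qed.

Lemma revenue_calibrated_independent (v : 'I_n -> R) :
  revenue p r s v = \sum_k p k * rev_at v (s k) (s k).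
Proof.
rewrite /revenue; under eq_bigr do rewrite rev_at_linear mulr_sumr.
under [RHS]eq_bigr do rewrite rev_at_linear mulr_sumr.
rewrite exchange_big [RHS]exchange_big; apply: eq_bigr => i _.
exact: (signal_swap i (unit_revenue v ^~ i)).
Qed.
End CalibratedIndependent.

Section Expectation.
Variables (R : realType) (I : finType) (p : I -> R).
Hypothesis p_ge0 : forall k, 0 <= p k.

Lemma expectZ (c : R) (X : I -> R) : expect p (fun k => c * X k) = c * expect p X.
Proof. by rewrite /expect mulr_sumr; apply: eq_bigr => k _; rewrite mulrCA. Qed.

Lemma expect_ge0 (X : I -> R) : (forall k, 0 <= X k) -> 0 <= expect p X.
Proof. by move=> X_ge0; apply: sumr_ge0 => k _; exact: mulr_ge0. Qed.

Lemma expect_min_le (X Y : I -> R) :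
  expect p (fun k => Num.min (X k) (Y k)) <= Num.min (expect p X) (expect p Y).
Proof.
by rewrite le_min; apply/andP; split; apply: ler_sum => k _;
  apply: ler_wpM2l => //; rewrite ge_min lexx ?orbT.
Qed.
End Expectation.

Section TwoBidders.
Variables (R : realType) (v : 'I_2 -> R).
Hypothesis v_ge0 : forall i, 0 <= v i.

Lemma ord2_cases (j : 'I_2) : j = ord0 \/ j = ord_max.
Proof. by case: j => [[|[|m]] lt_j2]; [left|right|]; try apply: val_inj. Qed.

Lemma price_two (i j : 'I_2) (t : 'I_2 -> R) : i != j ->
  price v t i = if t i == 0 then 0 else Num.max (v j * t j) 0 / t i.
Proof.
move=> neq_ij; rewrite /price (big_pred1_id _ _ _ (i := j)) // => k.
by case: (ord2_cases i) (ord2_cases j) (ord2_cases k) neq_ij => -> [] -> [] ->.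
Qed.

(* a winner pays exactly the other bid per click (also when its score is 0,
   since then both bids vanish) *)
Lemma winner_payment (i j : 'I_2) (t : 'I_2 -> R) :
  i != j -> (forall l, 0 <= t l) -> winner v t i -> t i * price v t i = v j * t j.
Proof.
move=> neq_ij t_ge0 /forallP /(_ j) beaten; rewrite (price_two _ neq_ij).
have bid_ge0 : 0 <= v j * t j by apply: mulr_ge0.
have [ti0 | ti_neq0] := eqVneq (t i) 0; last by rewrite (max_l bid_ge0) mulrC divfK.
by apply/esym/eqP; rewrite mulr0 eq_le bid_ge0 andbT -[0](mulr0 (v i)) -ti0.
Qed.

Lemma winner_pays_min (i : 'I_2) (t : 'I_2 -> R) :
  (forall l, 0 <= t l) -> winner v t i ->
  t i * price v t i = Num.min (v ord0 * t ord0) (v ord_max * t ord_max).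
Proof.
move=> t_ge0 win; have /forallP beats := win.
case: (ord2_cases i) win beats => -> win beats.
- by rewrite (@winner_payment _ ord_max) // min_r // beats.
- by rewrite (@winner_payment _ ord0) // min_l // beats.
Qed.

(* with truthful CTRs the revenue is the second-highest bid, whatever the
   tie-breaking, since every winner pays it *)
Lemma rev_at_truthful (t : 'I_2 -> R) : (forall l, 0 <= t l) ->
  rev_at v t t = Num.min (v ord0 * t ord0) (v ord_max * t ord_max).
Proof.
move=> t_ge0; rewrite /rev_at (eq_bigr _ (fun i => winner_pays_min t_ge0)).
have some_winner : (0 < #|[set i | winner v t i]|)%N.
  apply/card_gt0P; have [le01|le10] := leP (v ord0 * t ord0) (v ord_max * t ord_max).
  - by exists ord_max; rewrite inE; apply/forallP => j; case: (ord2_cases j) => ->.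
  - by exists ord0; rewrite inE; apply/forallP => j; case: (ord2_cases j) => -> //; exact: ltW.
rewrite (eq_bigl (fun i => i \in [set i | winner v t i])); last by move=> i; rewrite inE.
by rewrite sumr_const -[X in X / _]mulr_natr mulfK // pnatr_eq0 -lt0n.
Qed.
End TwoBidders.

Theorem mainTheorem1 (R : realType) (I : finType) (p : I -> R)
    (r s : I -> 'I_2 -> R) (v : 'I_2 -> R) :
  (forall i, 0 <= v i) ->
  is_prob p ->
  (forall k i, 0 <= r k i <= 1) ->
  (forall k i, 0 <= s k i <= 1) ->
  calibrated p r s ->
  independent p r s ->
  revenue p r s v <= Num.min (v ord0 * expect p (fun k => r k ord0))
                             (v ord_max * expect p (fun k => r k ord_max))
  /\ revenue p r (nodisc p r) v =
     Num.min (v ord0 * expect p (fun k => r k ord0))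
             (v ord_max * expect p (fun k => r k ord_max)).
Proof.
move=> v_ge0 [p_ge0 _] r_range s_range cal ind.
have r_ge0 k : forall i, 0 <= r k i by move=> i; case/andP: (r_range k i).
have s_ge0 k : forall i, 0 <= s k i by move=> i; case/andP: (s_range k i).
split.
- rewrite (revenue_calibrated_independent p_ge0 cal ind).
  under eq_bigr => k _ do rewrite (rev_at_truthful v_ge0 (s_ge0 k)).
  rewrite !(expect_signal p_ge0 cal ind) -!expectZ.
  exact: expect_min_le.
- rewrite revenue_constant_signal rev_at_truthful // => i.
  exact: expect_ge0.
Qed.
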